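(* For a nonempty partition $\lambda$, define the weight $\omega(\lambda)=1+4\sum_j(-1)^j$, where the sum is over those $j$ in the initial run of $\lambda$ that occur an odd number of times as a part of $\lambda$. Then for every positive integer $n$, $$M_e(n)-M_o(n)=\sum_{\lambda}\omega(\lambda),$$ the sum being over all partitions $\lambda$ of $n$.
   Context: The initial run of a partition $\lambda$ is the set $\{1,2,\dots,r\}$ where $r\ge 0$ is the largest integer such that each of $1,2,\dots,r$ occurs as a part of $\lambda$ (empty if $1$ is not a part). For example $(7,7,5,3,3,3,3,2,1,1)$ has initial run $\{1,2,3\}$. For $|q|<1$ write $(z;q)_\infty=\prod_{j\geq 0}(1-zq^j)$; $M_e(n)-M_o(n)$ (even-crank minus odd-crank partitions of $n$, Andrews–Garvan crank) is defined by $\sum_{n\geq 0}(M_e(n)-M_o(n))q^n=\frac{(q;q)_\infty}{(-q;q)_\infty^2}$. *)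

From mathcomp Require Import all_boot all_order all_algebra.
Set Implicit Arguments. Unset Strict Implicit. Unset Printing Implicit Defensive.
Import GRing.Theory Num.Theory.
Local Open Scope ring_scope.

(* A partition of n is encoded by its multiplicity function:
   m : {ffun 'I_n -> 'I_n.+1}, where (m i) is the number of times the part
   (i+1) occurs.  Every part of a partition of n lies in {1..n} and each
   multiplicity is <= n, so this is a bijective encoding of partitions of n. *)
Definition is_partition (n : nat) (m : {ffun 'I_n -> 'I_n.+1}) : bool :=
  (\sum_(i < n) i.+1 * m i)%N == n.

Definition occurs (n : nat) (m : {ffun 'I_n -> 'I_n.+1}) (i : 'I_n) : bool :=
  (0 < m i)%N.

Definition in_initial_run (n : nat) (m : {ffun 'I_n -> 'I_n.+1}) (i : 'I_n)
  : bool := [forall k : 'I_n, (k <= i)%N ==> occurs m k].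

Definition omega (n : nat) (m : {ffun 'I_n -> 'I_n.+1}) : int :=
  1 + 4 * \sum_(i < n | in_initial_run m i && odd (m i)) (-1) ^+ i.+1.

(* Coefficient of q^n in (q;q)_oo / (-q;q)_oo^2.  Modulo q^(n+1) only the
   factors j = 1..n matter, and 1/(1+q^j)^2 = sum_k (-1)^k (k+1) q^(jk),
   of which only the terms with k <= n matter. *)
Definition crank_gf_trunc (n : nat) : {poly int} :=
  \prod_(1 <= j < n.+1)
     ((1 - 'X^j) * \sum_(k < n.+1) (((-1) ^+ k * k.+1%:R) *: 'X^(j * k))).

Definition MeMo (n : nat) : int := (crank_gf_trunc n)`_n.

From mathcomp Require Import all_boot all_order all_algebra.
From mathcomp Require Import ring zify.
Set Implicit Arguments. Unset Strict Implicit. Unset Printing Implicit Defensive.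
Import GRing.Theory.
Local Open Scope ring_scope.

(* Sorting partitions by their initial run, the generating function of the
   right-hand side is
     1/(q;q)_oo + 4 sum_(i>=1) (-1)^i q^(i(i+1)/2) / ((q;q)_oo (1 + q^i)),
   the i-th term counting the partitions whose initial run contains i, with i
   of odd multiplicity.  After multiplication by (q;q)_oo (-q;q)_oo^2 the theorem
   becomes
     (q;q)_oo^2 = (-q;q)_oo^2 (1 + 4 sum_(i>=1) (-1)^i q^(i(i+1)/2) / (1 + q^i)),
   which follows, using (1 - y)^2 = (1 + y)^2 - 4y and telescoping, from
     (q;q)_oo^2
       = sum_(i>=0) (-1)^i q^C(i+1,2) (1 - q^(i+1))^2 (-q;q)_oo^2 / (1 + q^(i+1)).
   This is the limit n -> oo, where [2n, n-i-1]_q -> 1/(q;q)_oo, of the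
   polynomial identity
     sum_(i<n) (-1)^i q^C(i+1,2) (1 - q^(i+1))^2 (-q;q)_n^2 / (1 + q^(i+1)) [2n, n-i-1]_q
       = (q;q)_2n,
   whose induction step reduces to the vanishing of the alternating sums
   sum_j (-1)^j q^C(j-r,2) [N, j]_q for 0 <= r < N.  All series are compared as
   polynomials modulo q^(n+1). *)

(** * Congruences modulo X^M *)

Definition eqmodX (R : comNzRingType) (M : nat) (p q : {poly R}) : Prop :=
  exists r : {poly R}, p - q = r * 'X^M.

Notation "p = q %[modX M ]" := (eqmodX M p q)
  (at level 70, q at next level, format "p  =  q  %[modX  M ]").

Section CongruenceModXn.

Variable R : comNzRingType.
Implicit Types (p q u : {poly R}) (M : nat).

Lemma eqmodX_refl M p : p = p %[modX M].
Proof. by exists 0; rewrite subrr mul0r. Qed.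

Lemma eqmodX_eq M p q : p = q -> p = q %[modX M].
Proof. by move->; apply: eqmodX_refl. Qed.

Lemma eqmodX_sym M p q : p = q %[modX M] -> q = p %[modX M].
Proof. by case=> r h; exists (- r); rewrite mulNr -h opprB. Qed.

Lemma eqmodX_trans M p q s : p = q %[modX M] -> q = s %[modX M] -> p = s %[modX M].
Proof. by case=> r1 h1 [r2 h2]; exists (r1 + r2); rewrite mulrDl -h1 -h2 addrA subrK. Qed.

Lemma eqmodXD M p1 q1 p2 q2 :
  p1 = q1 %[modX M] -> p2 = q2 %[modX M] -> p1 + p2 = q1 + q2 %[modX M].
Proof. by case=> r1 h1 [r2 h2]; exists (r1 + r2); rewrite mulrDl -h1 -h2; ring. Qed.

Lemma eqmodXN M p q : p = q %[modX M] -> - p = - q %[modX M].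
Proof. by case=> r h; exists (- r); rewrite mulNr -h; ring. Qed.

Lemma eqmodXB M p1 q1 p2 q2 :
  p1 = q1 %[modX M] -> p2 = q2 %[modX M] -> p1 - p2 = q1 - q2 %[modX M].
Proof. by move=> h1 h2; apply: eqmodXD h1 (eqmodXN h2). Qed.

Lemma eqmodXM M p1 q1 p2 q2 :
  p1 = q1 %[modX M] -> p2 = q2 %[modX M] -> p1 * p2 = q1 * q2 %[modX M].
Proof.
case=> r1 h1 [r2 h2]; exists (r1 * p2 + q1 * r2).
have -> : p1 * p2 - q1 * q2 = (p1 - q1) * p2 + q1 * (p2 - q2) by ring.
by rewrite h1 h2; ring.
Qed.

Lemma eqmodXMl M c p q : p = q %[modX M] -> c * p = c * q %[modX M].
Proof. exact/eqmodXM/eqmodX_refl. Qed.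

Lemma eqmodXMr M c p q : p = q %[modX M] -> p * c = q * c %[modX M].
Proof. by move/eqmodXM; apply; apply: eqmodX_refl. Qed.

Lemma eqmodX_sum M (I : Type) (r : seq I) (P : pred I) (F G : I -> {poly R}) :
  (forall i, P i -> F i = G i %[modX M]) ->
  \sum_(i <- r | P i) F i = \sum_(i <- r | P i) G i %[modX M].
Proof.
move=> FG; apply: (big_ind2 (eqmodX M)) => //; first exact: eqmodX_refl.
exact: eqmodXD.
Qed.

Lemma eqmodX_prod M (I : Type) (r : seq I) (P : pred I) (F G : I -> {poly R}) :
  (forall i, P i -> F i = G i %[modX M]) ->
  \prod_(i <- r | P i) F i = \prod_(i <- r | P i) G i %[modX M].
Proof.
move=> FG; apply: (big_ind2 (eqmodX M)) => //; first exact: eqmodX_refl.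
exact: eqmodXM.
Qed.

Lemma eqmodX_prod1 M (I : Type) (r : seq I) (P : pred I) (F : I -> {poly R}) :
  (forall i, P i -> F i = 1 %[modX M]) -> \prod_(i <- r | P i) F i = 1 %[modX M].
Proof. by move/(eqmodX_prod r); rewrite big1_eq. Qed.

Lemma eqmodX_Xn0 M a : (M <= a)%N -> ('X^a : {poly R}) = 0 %[modX M].
Proof. by move=> Ma; exists 'X^(a - M); rewrite subr0 -exprD subnK. Qed.

Lemma eqmodX_mulXn M p c a : (M <= a)%N -> p * (1 + c * 'X^a) = p %[modX M].
Proof.
move=> Ma; have := eqmodXMl p (eqmodXD (eqmodX_refl M 1) (eqmodXMl c (eqmodX_Xn0 Ma))).
by rewrite mulr0 addr0 mulr1.
Qed.

Lemma eqmodX_mul1DXn M p a : (M <= a)%N -> p * (1 + 'X^a) = p %[modX M].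
Proof. by move/(eqmodX_mulXn p 1); rewrite mul1r. Qed.

Lemma eqmodX_mul1BXn M p a : (M <= a)%N -> p * (1 - 'X^a) = p %[modX M].
Proof. by move/(eqmodX_mulXn p (-1)); rewrite mulN1r. Qed.

Lemma coef_eqmodX M p q i : p = q %[modX M] -> (i < M)%N -> p`_i = q`_i.
Proof. by case=> r pq iM; apply/eqP; rewrite -subr_eq0 -coefB pq coefMXn iM. Qed.

(* [u] is invertible modulo [X^M]: [u * \sum_(i < M) (1 - u)^i = 1 - (1 - u)^M]
   and [(1 - u)^M] is divisible by [X^M]. *)
Lemma eqmodX_cancel M u p q :
  u = 1 %[modX 1] -> u * p = u * q %[modX M] -> p = q %[modX M].
Proof.
case=> s u1 upq; set v := \sum_(i < M) (1 - u) ^+ i.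
have vu : v * u = 1 %[modX M].
  have -> : v * u = 1 - (1 - u) ^+ M.
    have := subrXX 1 (1 - u) M; rewrite expr1n => ->.
    under eq_bigr do rewrite expr1n mul1r.
    by rewrite opprB addrC subrK mulrC.
  rewrite -[X in _ = X %[modX _]]subr0; apply/eqmodXB; first exact: eqmodX_refl.
  have -> : 1 - u = - s * 'X by rewrite -opprB u1 expr1 mulNr.
  by exists ((- s) ^+ M); rewrite subr0 exprMn.
have := eqmodXMl v upq; rewrite !mulrA => vupq.
apply: eqmodX_trans (eqmodX_trans vupq _); last first.
  by rewrite -[X in _ = X %[modX _]]mul1r; apply: eqmodXMr.
by apply: eqmodX_sym; rewrite -[X in _ = X %[modX _]]mul1r; apply: eqmodXMr.
Qed.

End CongruenceModXn.

(** * q-Pochhammer symbols and Gaussian binomials *)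

Lemma bin2S n : 'C(n.+1, 2) = ('C(n, 2) + n)%N.
Proof. by rewrite binS bin1. Qed.

Definition qpoch n : {poly int} := \prod_(i < n) (1 - 'X^(i.+1)).
Definition qpochN n : {poly int} := \prod_(i < n) (1 + 'X^(i.+1)).
Definition qpochN_skip n (k : nat) : {poly int} :=
  \prod_(i < n | i != k :> nat) (1 + 'X^(i.+1)).

Lemma qpoch0 : qpoch 0 = 1. Proof. by rewrite /qpoch big_ord0. Qed.

Lemma qpochS n : qpoch n.+1 = qpoch n * (1 - 'X^(n.+1)).
Proof. by rewrite /qpoch big_ord_recr. Qed.

Lemma qpochNS n : qpochN n.+1 = qpochN n * (1 + 'X^(n.+1)).
Proof. by rewrite /qpochN big_ord_recr. Qed.

Lemma qpochD b k : qpoch (b + k) = qpoch b * \prod_(i < k) (1 - 'X^((b + i).+1)).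
Proof.
elim: k => [|k IHk]; first by rewrite addn0 big_ord0 mulr1.
by rewrite addnS qpochS IHk big_ord_recr mulrA.
Qed.

Lemma qpochN_skipS n k : k != n -> qpochN_skip n.+1 k = qpochN_skip n k * (1 + 'X^(n.+1)).
Proof.
by move=> kn; rewrite /qpochN_skip big_mkcond big_ord_recr /= eq_sym kn -big_mkcond.
Qed.

Lemma qpochN_skip_last n : qpochN_skip n.+1 n = qpochN n.
Proof.
rewrite /qpochN_skip big_mkcond big_ord_recr /= eqxx mulr1.
by apply: eq_bigr => i _; rewrite neq_ltn ltn_ord.
Qed.

Lemma qpochN_skipE n k : (k < n)%N -> (1 + 'X^(k.+1)) * qpochN_skip n k = qpochN n.
Proof. by move=> kn; rewrite /qpochN (bigD1 (Ordinal kn)). Qed.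

Lemma qpoch_eqmodX1 n : qpoch n = 1 %[modX 1].
Proof.
apply: eqmodX_prod1 => i _.
by rewrite -[X in X = _ %[modX _]]mul1r; apply: eqmodX_mul1BXn.
Qed.

Lemma qpochN_eqmodX1 n : qpochN n = 1 %[modX 1].
Proof.
apply: eqmodX_prod1 => i _.
by rewrite -[X in X = _ %[modX _]]mul1r; apply: eqmodX_mul1DXn.
Qed.

Lemma qpoch_neq0 n : qpoch n != 0.
Proof.
apply/eqP => /(congr1 (fun p : {poly int} => p`_0)).
by rewrite (coef_eqmodX (qpoch_eqmodX1 n)) // coef1 coef0.
Qed.

Fixpoint qbinom (N j : nat) {struct N} : {poly int} :=
  match N, j with
  | 0, 0 => 1
  | 0, _.+1 => 0
  | _.+1, 0 => 1
  | N'.+1, j'.+1 => qbinom N' j' + 'X^(j'.+1) * qbinom N' j'.+1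
  end.

Lemma qbinom0 N : qbinom N 0 = 1. Proof. by case: N. Qed.

Lemma qbinom_small N j : (N < j)%N -> qbinom N j = 0.
Proof.
elim: N j => [|N IHN] [|j] //= ltNj.
by rewrite !IHN ?mulr0 ?addr0 //; lia.
Qed.

Lemma qbinom_qpoch N j : (j <= N)%N -> qbinom N j * qpoch j * qpoch (N - j) = qpoch N.
Proof.
elim: N j => [|N IHN] [|j] //= le_jN; rewrite ?qpoch0 ?subn0 ?mul1r //.
rewrite subSS !mulrDl qpochS.
have -> : qbinom N j * (qpoch j * (1 - 'X^(j.+1))) * qpoch (N - j)
          = qpoch N * (1 - 'X^(j.+1)) by rewrite -(IHN j) //; ring.
have [ltjN|eqjN] : (j < N)%N \/ j = N by lia.
- have -> : (N - j = (N - j.+1).+1)%N by lia.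
  rewrite qpochS.
  have -> : 'X^(j.+1) * qbinom N j.+1 * (qpoch j * (1 - 'X^(j.+1))) *
            (qpoch (N - j.+1) * (1 - 'X^((N - j.+1).+1)))
          = 'X^(j.+1) * (1 - 'X^((N - j.+1).+1)) *
            (qbinom N j.+1 * qpoch j.+1 * qpoch (N - j.+1)) by rewrite qpochS; ring.
  rewrite IHN // qpochS.
  have -> : 'X^(N.+1) = 'X^(j.+1) * 'X^((N - j.+1).+1) :> {poly int}.
    by rewrite -exprD; congr (_ ^+ _); lia.
  ring.
- by rewrite eqjN (qbinom_small (ltnSn N)) subnn qpoch0 qpochS; ring.
Qed.

Lemma qbinom_sub N j : (j <= N)%N -> qbinom N (N - j) = qbinom N j.
Proof.
move=> le_jN; apply: (mulIf (qpoch_neq0 j)); apply: (mulIf (qpoch_neq0 (N - j))).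
rewrite qbinom_qpoch // -{1}(qbinom_qpoch (leq_subr j N)) subKn //; ring.
Qed.

Lemma qbinomSS_mul N a : (a <= N)%N ->
  qbinom N.+2 a.+1 * (1 - 'X^(a.+1)) * (1 - 'X^(N.+1 - a)) =
  qbinom N a * (1 - 'X^(N.+1)) * (1 - 'X^(N.+2)).
Proof.
move=> le_aN; apply: (mulIf (qpoch_neq0 a)); apply: (mulIf (qpoch_neq0 (N - a))).
have eq : qbinom N.+2 a.+1 * qpoch a.+1 * qpoch (N.+2 - a.+1) = qpoch N.+2.
  by apply: qbinom_qpoch; lia.
rewrite (_ : N.+2 - a.+1 = (N - a).+1)%N in eq; last by lia.
rewrite !qpochS -(qbinom_qpoch le_aN) in eq.
rewrite (_ : N.+1 - a = (N - a).+1)%N; last by lia.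
transitivity (qbinom N.+2 a.+1 * (qpoch a * (1 - 'X^(a.+1))) *
              (qpoch (N - a) * (1 - 'X^((N - a).+1)))); first ring.
by rewrite eq; ring.
Qed.

(* The binomial coefficient C(j - r, 2) of the integer j - r. *)
Definition bin2z (j r : nat) : nat := ('C(j - r, 2) + 'C((r - j).+1, 2))%N.

Lemma bin2zSS j r : bin2z j.+1 r.+1 = bin2z j r.
Proof. by rewrite /bin2z !subSS. Qed.

Lemma bin2zS j r : (bin2z j.+1 r + r = bin2z j r + j)%N.
Proof.
rewrite /bin2z; have [le_rj|lt_jr] := leqP r j.
- have -> : (j.+1 - r = (j - r).+1)%N by lia.
  have -> : (r - j.+1 = 0)%N by lia.
  have -> : (r - j = 0)%N by lia.
  rewrite bin2S; lia.
- have -> : (j.+1 - r = 0)%N by lia.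
  have -> : (j - r = 0)%N by lia.
  have -> : (r - j = (r - j.+1).+1)%N by lia.
  rewrite (bin2S (r - j.+1).+1); lia.
Qed.

(* By the q-binomial theorem this is q^C(r+1,2) (q^-r; q)_N, which vanishes
   for r < N. *)
Definition qbinom_alt N r : {poly int} :=
  \sum_(j < N.+1) (-1) ^+ j * 'X^(bin2z j r) * qbinom N j.

Lemma qbinom_altS N r : qbinom_alt N.+1 r =
  ('X^r - 1) * \sum_(j < N.+1) (-1) ^+ j * 'X^(bin2z j.+1 r) * qbinom N j.
Proof.
set A := \sum_(j < N.+1) _.
have shifted : \sum_(j < N.+2) (-1) ^+ j * 'X^(bin2z j r) * 'X^j * qbinom N j = 'X^r * A.
  rewrite big_ord_recr /= qbinom_small // mulr0 addr0 /A mulr_sumr.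
  apply: eq_bigr => j _.
  have e : 'X^(bin2z j r) * 'X^j = 'X^r * 'X^(bin2z j.+1 r) :> {poly int}.
    by rewrite -!exprD [(r + _)%N]addnC bin2zS.
  transitivity ((-1) ^+ j * ('X^(bin2z j r) * 'X^j) * qbinom N j); first ring.
  by rewrite e; ring.
have pascal : qbinom_alt N.+1 r =
    \sum_(j < N.+2) (-1) ^+ j * 'X^(bin2z j r) * 'X^j * qbinom N j - A.
  rewrite /qbinom_alt big_ord_recl [in RHS]big_ord_recl /= !qbinom0 expr0 !mulr1.
  have -> : \sum_(i < N.+1) (-1) ^+ i.+1 * 'X^(bin2z i.+1 r) * qbinom N.+1 i.+1 =
    \sum_(i < N.+1) (-1) ^+ i.+1 * 'X^(bin2z i.+1 r) * 'X^(i.+1) * qbinom N i.+1 - A.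
    by rewrite /A -sumrB; apply: eq_bigr => i _ /=; rewrite !exprS; ring.
  ring.
by rewrite pascal shifted; ring.
Qed.

Lemma qbinom_alt_eq0 r N : (r < N)%N -> qbinom_alt N r = 0.
Proof.
elim: r N => [|r IHr] [|N] // lt_rN; rewrite qbinom_altS.
  by rewrite expr0 subrr mul0r.
under eq_bigr do rewrite bin2zSS.
by rewrite -/(qbinom_alt N r) IHr ?mulr0.
Qed.

Lemma signr_odd_eq a b : odd a = odd b -> (-1) ^+ a = (-1) ^+ b :> {poly int}.
Proof. by move=> ab; rewrite -signr_odd ab signr_odd. Qed.

Definition four_term m j : {poly int} :=
  'X^(bin2z j m.+1) - 'X^((bin2z j m).+1) - 'X^((bin2z j m.-1).+1) + 'X^(bin2z j (m - 2)).

Definition four_term_val k : {poly int} :=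
  'X^('C(k.-1, 2)) * (1 - 'X^k) * (1 - 'X^(k + k)).

Lemma four_termE (a K e1 e2 e3 e4 : nat) :
  e1 = (a + (K + K + K))%N -> e2 = (a + (K + K))%N -> e3 = (a + K)%N -> e4 = a ->
  'X^e1 - 'X^e2 - 'X^e3 + 'X^e4 = 'X^a * (1 - 'X^K) * (1 - 'X^(K + K)) :> {poly int}.
Proof. by move=> -> -> -> ->; rewrite !exprD; ring. Qed.

Lemma four_termE_rev (a K e1 e2 e3 e4 : nat) :
  e1 = a -> e2 = (a + K)%N -> e3 = (a + (K + K))%N -> e4 = (a + (K + K + K))%N ->
  'X^e1 - 'X^e2 - 'X^e3 + 'X^e4 = 'X^a * (1 - 'X^K) * (1 - 'X^(K + K)) :> {poly int}.
Proof. by move=> h1 h2 h3 h4; rewrite -(four_termE h4 h3 h2 h1); ring. Qed.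

Lemma four_term_above m k : (2 <= m)%N -> four_term m (m + k) = four_term_val k.
Proof.
move=> le2m; rewrite /four_term /four_term_val /bin2z.
case: k => [|k].
  rewrite addn0 subnn.
  have -> : (m - m.+1 = 0)%N by lia.
  have -> : (m.+1 - m = 1)%N by lia.
  have -> : (m - m.-1 = 1)%N by lia.
  have -> : (m.-1 - m = 0)%N by lia.
  have -> : (m - (m - 2) = 2)%N by lia.
  have -> : (m - 2 - m = 0)%N by lia.
  by rewrite /= expr0 subrr; ring.
have -> : (m + k.+1 - m.+1 = k)%N by lia.
have -> : (m.+1 - (m + k.+1) = 0)%N by lia.
have -> : (m + k.+1 - m = k.+1)%N by lia.
have -> : (m - (m + k.+1) = 0)%N by lia.
have -> : (m + k.+1 - m.-1 = k.+2)%N by lia.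
have -> : (m.-1 - (m + k.+1) = 0)%N by lia.
have -> : (m + k.+1 - (m - 2) = k.+3)%N by lia.
have -> : (m - 2 - (m + k.+1) = 0)%N by lia.
by apply: four_termE_rev; rewrite /= (bin_small (ltnSn 1)) ?addn0 ?bin2S; lia.
Qed.

Lemma four_term_below m k : (2 <= m)%N -> (k < m)%N ->
  four_term m (m - k.+1) = four_term_val k.+1.
Proof.
move=> le2m lt_km; rewrite /four_term /four_term_val /bin2z.
have -> : (m - k.+1 - m.+1 = 0)%N by lia.
have -> : (m.+1 - (m - k.+1) = k.+2)%N by lia.
have -> : (m - k.+1 - m = 0)%N by lia.
have -> : (m - (m - k.+1) = k.+1)%N by lia.
have -> : (m - k.+1 - m.-1 = 0)%N by lia.
have -> : (m.-1 - (m - k.+1) = k)%N by lia.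
have -> : ('C(m - k.+1 - (m - 2), 2) + 'C((m - 2 - (m - k.+1)).+1, 2))%N = 'C(k, 2).
  case: k lt_km => [|k] lt_km.
    have -> : (m - 1 - (m - 2) = 1)%N by lia.
    by have -> : (m - 2 - (m - 1) = 0)%N by lia.
  have -> : (m - k.+2 - (m - 2) = 0)%N by lia.
  by have -> : ((m - 2 - (m - k.+2)).+1 = k.+1)%N by lia.
by apply: four_termE; rewrite /= ?(bin_small (ltn0Sn 1)) ?add0n ?bin2S; lia.
Qed.

Lemma four_term_sum_eq0 m : (2 <= m)%N ->
  \sum_(j < (m + m).+1) (-1) ^+ j * four_term m j * qbinom (m + m) j = 0.
Proof.
move=> le2m.
transitivity (qbinom_alt (m + m) m.+1 - 'X * qbinom_alt (m + m) m
              - 'X * qbinom_alt (m + m) m.-1 + qbinom_alt (m + m) (m - 2)).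
  rewrite /qbinom_alt !mulr_sumr -!sumrB -big_split /=; apply: eq_bigr => j _.
  by rewrite /four_term (exprS _ (bin2z j m)) (exprS _ (bin2z j m.-1)); ring.
have vanish r : (r < m + m)%N -> qbinom_alt (m + m) r = 0 by apply: qbinom_alt_eq0.
by rewrite !vanish ?mulr0 ?subrr ?add0r //; lia.
Qed.

(* Fold [four_term_sum_eq0] around its centre [j = m], where [four_term] vanishes:
   both halves contribute the same sum, by [qbinom_sub]. *)
Lemma four_term_val_sum_eq0 m : (2 <= m)%N ->
  \sum_(i < m) (-1) ^+ i * four_term_val i.+1 * qbinom (m + m) (m - i.+1) = 0.
Proof.
move=> le2m; set L := \sum_(i < m) _.
have := four_term_sum_eq0 le2m.
rewrite -addnS big_split_ord big_ord_recl /= addn0.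
have -> : four_term m m = 0.
  rewrite -[m in four_term _ m]addn0 four_term_above //.
  by rewrite /four_term_val expr0 subrr mulr0.
rewrite mulr0 mul0r add0r.
rewrite (reindex_inj rev_ord_inj) -big_split /= => halves.
have : L * (2%:R * (-1) ^+ m.+1) = 0.
  rewrite -halves /L mulr_suml; apply: eq_bigr => i _.
  have lt_im := ltn_ord i.
  rewrite four_term_below // four_term_above //.
  rewrite -(qbinom_sub (_ : m + i.+1 <= m + m)%N); last by lia.
  have -> : (m + m - (m + i.+1) = m - i.+1)%N by lia.
  have -> : (-1) ^+ (m - i.+1) = (-1) ^+ (m.+1 + i) :> {poly int}.
    by apply: signr_odd_eq; lia.
  have -> : (-1) ^+ (m + i.+1) = (-1) ^+ (m.+1 + i) :> {poly int}.
    by apply: signr_odd_eq; lia.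
  by rewrite exprD; ring.
move/eqP; rewrite !mulf_eq0 signr_eq0 orbF => /orP[/eqP //|].
by rewrite -polyC1 -polyCMn polyC_eq0.
Qed.

(** * A finite identity for (q;q)_2n *)

Definition tri_term i : {poly int} :=
  (-1) ^+ i * 'X^('C(i.+1, 2)) * (1 - 'X^(i.+1)) ^+ 2.

Definition tri_qbinom_sum n : {poly int} :=
  \sum_(i < n) tri_term i * qpochN_skip n i * qpochN n * qbinom (n + n) (n - i.+1).

Lemma tri_qbinom_sum_termS n i : (i < n)%N ->
  tri_term i * qpochN_skip n.+1 i * qpochN n.+1 * qbinom (n.+1 + n.+1) (n.+1 - i.+1) =
  tri_term i * qpochN_skip n i * qpochN n * qbinom (n + n) (n - i.+1)
    * ((1 - 'X^((n + n).+1)) * (1 - 'X^((n + n).+2)))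
  + qpochN n ^+ 2 * 'X^n *
    ((-1) ^+ i * four_term_val i.+1 * qbinom (n.+1 + n.+1) (n.+1 - i.+1)).
Proof.
move=> lt_in.
have -> : (n.+1 + n.+1 = (n + n).+2)%N by lia.
have -> : (n.+1 - i.+1 = (n - i.+1).+1)%N by lia.
have shift := qbinomSS_mul (leq_trans (leq_subr i.+1 n) (leq_addl n n)).
set g := qbinom (n + n).+2 (n - i.+1).+1 in shift *.
transitivity (tri_term i * qpochN_skip n i * qpochN n *
    (g * (1 - 'X^((n - i.+1).+1)) * (1 - 'X^((n + n).+1 - (n - i.+1)))) +
    qpochN n ^+ 2 * 'X^n * ((-1) ^+ i * four_term_val i.+1 * g)); last first.
  by rewrite shift; ring.
rewrite qpochN_skipS ?neq_ltn ?lt_in // qpochNS -(qpochN_skipE lt_in).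
have x1 : 'X^(n.+1) = 'X^(n - i) * 'X^(i.+1) :> {poly int}.
  by rewrite -exprD; congr (_ ^+ _); lia.
have x2 : 'X^((n - i.+1).+1) = 'X^(n - i) :> {poly int}.
  by congr (_ ^+ _); lia.
have x3 : 'X^((n + n).+1 - (n - i.+1)) = 'X^(n - i) * 'X^(i.+1) * 'X^(i.+1) :> {poly int}.
  by rewrite -!exprD; congr (_ ^+ _); lia.
have x4 : 'X^n = 'X^(n - i) * 'X^i :> {poly int}.
  by rewrite -exprD; congr (_ ^+ _); lia.
have x5 : 'X^('C(i.+1, 2)) = 'X^('C(i, 2)) * 'X^i :> {poly int}.
  by rewrite -exprD bin2S.
rewrite /tri_term /four_term_val /= x1 x2 x3 x4 x5 !exprD; ring.
Qed.

Lemma tri_qbinom_sum_lastS n :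
  tri_term n * qpochN_skip n.+1 n * qpochN n.+1 * qbinom (n.+1 + n.+1) (n.+1 - n.+1) =
  qpochN n ^+ 2 * 'X^n *
    ((-1) ^+ n * four_term_val n.+1 * qbinom (n.+1 + n.+1) (n.+1 - n.+1)).
Proof.
rewrite qpochN_skip_last qpochNS /tri_term /four_term_val /=.
have -> : 'X^('C(n.+1, 2)) = 'X^('C(n, 2)) * 'X^n :> {poly int} by rewrite -exprD bin2S.
rewrite !exprD; ring.
Qed.

Lemma tri_qbinom_sumS n : (0 < n)%N ->
  tri_qbinom_sum n.+1 =
  tri_qbinom_sum n * ((1 - 'X^((n + n).+1)) * (1 - 'X^((n + n).+2))).
Proof.
move=> n_gt0; rewrite /tri_qbinom_sum big_ord_recr /= tri_qbinom_sum_lastS.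
under eq_bigr => i _ do rewrite tri_qbinom_sum_termS //.
rewrite big_split /= -mulr_suml -mulr_sumr -addrA -mulrDr.
rewrite -(big_ord_recr n (fun i => (-1) ^+ i * four_term_val i.+1 *
                                   qbinom (n.+1 + n.+1) (n.+1 - i.+1))).
by rewrite four_term_val_sum_eq0 ?mulr0 ?addr0.
Qed.

Lemma tri_qbinom_sumE n : (0 < n)%N -> tri_qbinom_sum n = qpoch (n + n).
Proof.
case: n => // n _; elim: n => [|n IHn].
  rewrite /tri_qbinom_sum /qpochN_skip /qpochN !big_ord1 big_mkcond big_ord1 /=.
  by rewrite /tri_term (bin_small (ltnSn 1)) !qpochS qpoch0; ring.
rewrite tri_qbinom_sumS // IHn (_ : n.+2 + n.+2 = (n.+1 + n.+1).+2)%N; last by lia.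
by rewrite (qpochS (n.+1 + n.+1).+1) (qpochS (n.+1 + n.+1)) mulrA.
Qed.

Lemma qpoch_eqmodX_addn M n k : (M <= n.+1)%N -> qpoch (n + k) = qpoch n %[modX M].
Proof.
move=> le_Mn; elim: k => [|k IHk]; first by rewrite addn0; apply: eqmodX_refl.
by rewrite addnS qpochS; apply: eqmodX_trans IHk; apply: eqmodX_mul1BXn; lia.
Qed.

Lemma Xn_mul_qpoch_tail_eqmodX M a b k : (M <= a + b.+1)%N ->
  ('X^a : {poly int}) * \prod_(j < k) (1 - 'X^((b + j).+1)) = 'X^a %[modX M].
Proof.
move=> le_Mab; elim: k => [|k IHk]; first by rewrite big_ord0 mulr1; apply: eqmodX_refl.
rewrite big_ord_recr mulrA /=; apply: eqmodX_trans (eqmodXMr _ IHk) _.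
have -> : 'X^a * (1 - 'X^((b + k).+1)) = 'X^a - 'X^(a + (b + k).+1) :> {poly int}.
  by rewrite exprD; ring.
rewrite -[X in _ = X %[modX _]]subr0; apply/eqmodXB; first exact: eqmodX_refl.
by apply: eqmodX_Xn0; lia.
Qed.

(* Multiply by the unit (q;q)_2n = [tri_qbinom_sum n] and compare term by term:
   [qbinom (n + n) (n - i.+1) * qpoch n ^+ 2] agrees with (q;q)_2n modulo the
   factor q^C(i+1,2) of [tri_term i]. *)
Lemma qpoch_sq_eqmodX_tri n : (0 < n)%N ->
  qpoch n ^+ 2 = \sum_(i < n) tri_term i * qpochN_skip n i * qpochN n %[modX n].
Proof.
move=> n_gt0.
apply: (eqmodX_cancel (u := qpoch (n + n))); first exact: qpoch_eqmodX1.
rewrite -{1}(tri_qbinom_sumE n_gt0) /tri_qbinom_sum mulr_suml mulr_sumr.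
apply: eqmodX_sum => i _; have lt_in := ltn_ord i.
set c := tri_term i * qpochN_skip n i * qpochN n.
have splitn : qpoch n = qpoch (n - i.+1) * \prod_(j < i.+1) (1 - 'X^((n - i.+1 + j).+1)).
  by rewrite -qpochD subnK.
have qbinom_n :
    qbinom (n + n) (n - i.+1) * qpoch (n - i.+1) * qpoch (n + i.+1) = qpoch (n + n).
  rewrite (_ : n + i.+1 = n + n - (n - i.+1))%N; last by lia.
  by apply: qbinom_qpoch; lia.
apply: (eqmodX_trans (q := c * qbinom (n + n) (n - i.+1) * (qpoch n * qpoch (n + i.+1)))).
  by rewrite expr2; apply/eqmodXMl/eqmodXMl/eqmodX_sym/qpoch_eqmodX_addn; lia.
rewrite {1}splitn.
apply: (eqmodX_trans (q := ((-1) ^+ i * (1 - 'X^(i.+1)) ^+ 2 * qpochN_skip n i *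
    qpochN n * qpoch (n + n)) *
    ('X^('C(i.+1, 2)) * \prod_(j < i.+1) (1 - 'X^((n - i.+1 + j).+1))))).
  by apply: eqmodX_eq; rewrite -qbinom_n /c /tri_term; ring.
have tail : ('X^('C(i.+1, 2)) : {poly int}) *
    \prod_(j < i.+1) (1 - 'X^((n - i.+1 + j).+1)) = 'X^('C(i.+1, 2)) %[modX n].
  by apply: Xn_mul_qpoch_tail_eqmodX; rewrite bin2S; lia.
apply: eqmodX_trans (eqmodXMl _ tail) _.
by apply: eqmodX_eq; rewrite /c /tri_term; ring.
Qed.

Lemma tri_telescope n :
  \sum_(i < n) (-1) ^+ i * 'X^('C(i.+1, 2)) * (1 + 'X^(i.+1)) =
  1 - (-1) ^+ n * 'X^('C(n.+1, 2)) :> {poly int}.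
Proof.
elim: n => [|n IHn]; first by rewrite big_ord0 (bin_small (ltnSn 1)) expr0; ring.
rewrite big_ord_recr /= IHn.
have -> : 'X^('C(n.+2, 2)) = 'X^('C(n.+1, 2)) * 'X^(n.+1) :> {poly int}.
  by rewrite -exprD bin2S.
by rewrite (exprS (-1)); ring.
Qed.

(* [(1 - y)^2 = (1 + y)^2 - 4y] with [y = q^(i+1)], then [tri_telescope]. *)
Lemma sum_tri_termE n :
  \sum_(i < n) tri_term i * qpochN_skip n i * qpochN n =
  qpochN n ^+ 2 * (1 - (-1) ^+ n * 'X^('C(n.+1, 2))) +
  4%:R * \sum_(i < n) (-1) ^+ i.+1 * 'X^('C(i.+2, 2)) * qpochN_skip n i * qpochN n.
Proof.
rewrite -tri_telescope !mulr_sumr -big_split; apply: eq_bigr => i _ /=.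
rewrite -(qpochN_skipE (ltn_ord i)) /tri_term.
have -> : 'X^('C(i.+2, 2)) = 'X^('C(i.+1, 2)) * 'X^(i.+1) :> {poly int}.
  by rewrite -exprD bin2S.
by rewrite (exprS (-1)); ring.
Qed.

Lemma qpoch_sq_eqmodX N :
  qpoch N ^+ 2 = qpochN N ^+ 2 +
    4%:R * \sum_(i < N) (-1) ^+ i.+1 * 'X^('C(i.+2, 2)) * qpochN_skip N i * qpochN N
  %[modX N.+1].
Proof.
have := qpoch_sq_eqmodX_tri (ltn0Sn N); rewrite sum_tri_termE => sq.
have bin_large : (N.+1 <= 'C(N.+2, 2))%N by rewrite bin2S; lia.
apply: eqmodX_trans (eqmodX_trans (eqmodX_sym (eqmodXM _ _)) sq) _.
- by rewrite qpochS; apply: eqmodX_mul1BXn.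
- by rewrite qpochS; apply: eqmodX_mul1BXn.
have qpochN_trunc : qpochN N.+1 = qpochN N %[modX N.+1].
  by rewrite qpochNS; apply: eqmodX_mul1DXn.
apply: eqmodXD.
  rewrite -mulNr; apply: eqmodX_trans (eqmodX_mulXn _ _ bin_large) _.
  exact: eqmodXM.
apply: eqmodXMl; rewrite big_ord_recr /= -[X in _ = X %[modX _]]addr0.
apply: eqmodXD.
  apply: eqmodX_sum => i _; apply/eqmodXM/qpochN_trunc/eqmodXMl.
  by rewrite qpochN_skipS ?neq_ltn ?ltn_ord //; apply: eqmodX_mul1DXn.
have := eqmodXMr (qpochN_skip N.+1 N * qpochN N.+1)
          (eqmodXMl ((-1) ^+ N.+1) (eqmodX_Xn0 int bin_large)).
by rewrite mulr0 !mul0r !mulrA.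
Qed.

(** * Generating functions of partitions *)

Definition part_gf N (A : pred nat) (j : nat) : {poly int} :=
  \sum_(t < N.+1 | A t) 'X^(j * t).

Lemma eq_part_gf N (A B : pred nat) j : A =1 B -> part_gf N A j = part_gf N B j.
Proof. by move=> AB; apply: eq_bigl => t; rewrite AB. Qed.

Lemma coef_prod_part_gf N (A : 'I_N -> pred nat) e :
  (\prod_(k < N) part_gf N (A k) k.+1)`_e =
  #|[pred f : {ffun 'I_N -> 'I_N.+1} |
     [forall k, A k (f k)] && ((\sum_(k < N) k.+1 * f k)%N == e)]|%:R.
Proof.
rewrite /part_gf; under eq_bigr do rewrite big_mkcond.
rewrite bigA_distr_bigA /= coef_sum -sum1_card natr_sum [RHS]big_mkcond /=.
apply: eq_bigr => f _; rewrite inE; case: (boolP [forall k, A k (f k)]) => /= [Af|nAf].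
  under eq_bigr => k _ do rewrite (forallP Af).
  by rewrite prodrXr coefXn eq_sym; case: (_ == _).
by case/forallPn: nAf => k Afk; rewrite (bigD1 k) //= (negbTE Afk) mul0r coef0.
Qed.

Lemma part_gf_pos N j : (0 < j)%N ->
  part_gf N (fun t => 0 < t)%N j = 'X^j * part_gf N predT j %[modX N.+1].
Proof.
move=> j_gt0; rewrite /part_gf big_mkcond big_ord_recl /= add0r.
rewrite mulr_sumr big_ord_recr /= -[X in X = _ %[modX _]]addr0; apply: eqmodXD.
  by apply: eqmodX_eq; apply: eq_bigr => t _; rewrite -exprD mulnS.
by apply/eqmodX_sym; rewrite -exprD; apply: eqmodX_Xn0; nia.
Qed.

Lemma part_gf_odd N j : (0 < j)%N ->
  (1 + 'X^j) * part_gf N odd j = 'X^j * part_gf N predT j %[modX N.+1].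
Proof.
move=> j_gt0.
have telescope L : (1 + 'X^j) * (\sum_(t < L) if odd t then 'X^(j * t) else 0) =
    'X^j * (\sum_(t < L) 'X^(j * t)) - (if odd L then 'X^(j * L) else 0) :> {poly int}.
  elim: L => [|L IHL]; first by rewrite !big_ord0 /=; ring.
  rewrite !big_ord_recr /= mulrDr IHL mulnS exprD.
  by case: (odd L) => /=; ring.
rewrite /part_gf big_mkcond telescope -[X in _ = X %[modX _]]subr0.
apply: eqmodXB; first exact: eqmodX_refl.
by case: (odd N.+1); [apply: eqmodX_Xn0; nia | apply: eqmodX_refl].
Qed.

Lemma part_gf_all N j : (0 < j)%N -> (1 - 'X^j) * part_gf N predT j = 1 %[modX N.+1].
Proof.
move=> j_gt0.
have geometric L : (1 - 'X^j) * (\sum_(t < L) 'X^(j * t)) = 1 - 'X^(j * L) :> {poly int}.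
  elim: L => [|L IHL]; first by rewrite big_ord0 muln0 expr0; ring.
  by rewrite big_ord_recr mulrDr IHL mulnS exprD; ring.
rewrite /part_gf geometric -[X in _ = X %[modX _]]subr0.
by apply: eqmodXB; [apply: eqmodX_refl | apply: eqmodX_Xn0; nia].
Qed.

(* Allowed multiplicities [t] of the part [k+1] in a partition whose initial
   run contains [i+1] with [i+1] occurring an odd number of times. *)
Definition run_odd_mult (i k t : nat) : bool :=
  if (k < i)%N then (0 < t)%N else if k == i then odd t else true.

Definition partition_gf N : {poly int} := \prod_(k < N) part_gf N predT k.+1.

Definition run_odd_gf N i : {poly int} := \prod_(k < N) part_gf N (run_odd_mult i k) k.+1.

Lemma qpoch_mul_partition_gf N : qpoch N * partition_gf N = 1 %[modX N.+1].
Proof.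
rewrite /qpoch /partition_gf -big_split /=.
by apply: eqmodX_prod1 => k _; apply: part_gf_all.
Qed.

Lemma sum_ord_succ_cond N i : (i < N)%N ->
  (\sum_(k < N) (if (k < i.+1)%N then k.+1 else 0))%N = 'C(i.+2, 2).
Proof.
move=> lt_iN.
rewrite -big_mkcond /= -(@big_ord_widen _ 0%N addn i.+1 N (fun k => k.+1) lt_iN).
elim: i.+1 => [|j IHj]; first by rewrite big_ord0.
by rewrite big_ord_recr /= IHj -bin2S.
Qed.

Lemma run_odd_gf_eqmodX N i : (i < N)%N ->
  (1 + 'X^(i.+1)) * run_odd_gf N i = 'X^('C(i.+2, 2)) * partition_gf N %[modX N.+1].
Proof.
move=> lt_iN.
rewrite -(sum_ord_succ_cond lt_iN) -prodrXr /partition_gf -big_split /=.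
rewrite /run_odd_gf (bigD1 (Ordinal lt_iN)) //.
rewrite [X in _ = X %[modX _]](bigD1 (Ordinal lt_iN)) //=.
rewrite mulrA ltnSn; apply: eqmodXM.
  rewrite (@eq_part_gf _ _ odd) => [|t]; last by rewrite /run_odd_mult ltnn eqxx.
  exact: part_gf_odd.
apply: eqmodX_prod => k; rewrite -val_eqE /= => ki.
case: (ltngtP k i) => [lt_ki|lt_ik|/eqP]; last by rewrite (negbTE ki).
- rewrite (@eq_part_gf _ _ (fun t => 0 < t)%N) => [|t]; last first.
    by rewrite /run_odd_mult lt_ki.
  by rewrite ltnS ltnW //; apply: part_gf_pos.
- rewrite (@eq_part_gf _ _ predT) => [|t]; last first.
    by rewrite /run_odd_mult ltnNge ltnW // (negbTE ki).
  by rewrite ltnS leqNgt lt_ik expr0 mul1r; apply: eqmodX_refl.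
Qed.

Lemma sqr1D_mul_sum_alt (y : {poly int}) L :
  (1 + y) ^+ 2 * (\sum_(k < L) (-1) ^+ k * k.+1%:R * y ^+ k) =
  1 - (-1) ^+ L * (L.+1%:R * y ^+ L + L%:R * y ^+ L.+1).
Proof.
elim: L => [|L IHL]; first by rewrite big_ord0; ring.
by rewrite big_ord_recr /= mulrDr IHL !exprS !mulrS; ring.
Qed.

Lemma crank_factor_eqmodX N j : (0 < j)%N ->
  ((1 + 'X^j) ^+ 2 : {poly int}) * ((1 - 'X^j) *
     \sum_(k < N.+1) (((-1) ^+ k * k.+1%:R) *: 'X^(j * k))) = 1 - 'X^j %[modX N.+1].
Proof.
move=> j_gt0.
under eq_bigr => k _ do
  rewrite -mul_polyC rmorphM rmorphXn rmorphN rmorph1 rmorph_nat exprM.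
rewrite mulrCA sqr1D_mul_sum_alt -[X in _ = X %[modX _]]mulr1; apply: eqmodXMl.
rewrite -[X in _ = X %[modX _]]subr0; apply: eqmodXB; first exact: eqmodX_refl.
have big1 : (N.+1 <= j * N.+1)%N by nia.
have big2 : (N.+1 <= j * N.+2)%N by nia.
have := eqmodXMl ((-1) ^+ N.+1) (eqmodXD (eqmodXMl N.+2%:R (eqmodX_Xn0 int big1))
                                         (eqmodXMl N.+1%:R (eqmodX_Xn0 int big2))).
by rewrite -!exprM !mulr0 addr0 mulr0.
Qed.

Lemma crank_gf_trunc_eqmodX N : qpochN N ^+ 2 * crank_gf_trunc N = qpoch N %[modX N.+1].
Proof.
rewrite /crank_gf_trunc big_add1 /= big_mkord /qpochN -prodrXl -big_split /=.
by apply: eqmodX_prod => k _; apply: crank_factor_eqmodX.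
Qed.

Lemma run_odd_gf_mul_eqmodX N i : (i < N)%N ->
  qpochN N ^+ 2 * qpoch N * run_odd_gf N i =
  'X^('C(i.+2, 2)) * qpochN_skip N i * qpochN N %[modX N.+1].
Proof.
move=> lt_iN.
have -> : qpochN N ^+ 2 * qpoch N * run_odd_gf N i =
    qpochN N * qpochN_skip N i * ((1 + 'X^(i.+1)) * run_odd_gf N i) * qpoch N.
  by rewrite -(qpochN_skipE lt_iN); ring.
apply: eqmodX_trans (eqmodXMr _ (eqmodXMl _ (run_odd_gf_eqmodX lt_iN))) _.
have -> : qpochN N * qpochN_skip N i * ('X^('C(i.+2, 2)) * partition_gf N) * qpoch N =
    'X^('C(i.+2, 2)) * qpochN_skip N i * qpochN N * (qpoch N * partition_gf N) by ring.
by rewrite -[X in _ = X %[modX _]]mulr1; apply/eqmodXMl/qpoch_mul_partition_gf.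
Qed.

Definition omega_gf N : {poly int} :=
  partition_gf N + \sum_(i < N) ((4 * (-1) ^+ i.+1 : int) *: run_odd_gf N i).

Lemma omega_gf_eqmodX N : omega_gf N = crank_gf_trunc N %[modX N.+1].
Proof.
have unit : qpochN N ^+ 2 * qpoch N = 1 %[modX 1].
  have := eqmodXM (eqmodXM (qpochN_eqmodX1 N) (qpochN_eqmodX1 N)) (qpoch_eqmodX1 N).
  by rewrite !mulr1.
apply: (eqmodX_cancel unit).
apply: (eqmodX_trans (q := qpochN N ^+ 2 + 4%:R * \sum_(i < N)
    (-1) ^+ i.+1 * 'X^('C(i.+2, 2)) * qpochN_skip N i * qpochN N)).
  rewrite /omega_gf mulrDr; apply: eqmodXD.
    have := eqmodXMl (qpochN N ^+ 2) (qpoch_mul_partition_gf N).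
    by rewrite mulr1 mulrA.
  rewrite !mulr_sumr; apply: eqmodX_sum => i _.
  rewrite -scalerAr -mul_polyC rmorphM rmorphXn rmorphN rmorph1 rmorph_nat -mulrA.
  apply: eqmodXMl; rewrite -!mulrA; apply: eqmodXMl; rewrite !mulrA.
  exact: run_odd_gf_mul_eqmodX.
apply: eqmodX_trans (eqmodX_sym (qpoch_sq_eqmodX N)) _.
have -> : qpochN N ^+ 2 * qpoch N * crank_gf_trunc N =
    qpoch N * (qpochN N ^+ 2 * crank_gf_trunc N) by ring.
by rewrite expr2; apply/eqmodXMl/eqmodX_sym/crank_gf_trunc_eqmodX.
Qed.

Lemma forall_run_odd_mult n (m : {ffun 'I_n -> 'I_n.+1}) (i : 'I_n) :
  [forall k : 'I_n, run_odd_mult i k (m k)] = in_initial_run m i && odd (m i).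
Proof.
apply/forallP/andP => [runm | [/forallP runm oddm] k].
  have runm_i := runm i; rewrite /run_odd_mult ltnn eqxx in runm_i.
  split => //; apply/forallP => k; apply/implyP; rewrite /occurs leq_eqVlt.
  case/orP => [/eqP/val_inj-> | lt_ki]; first exact: odd_gt0.
  by have := runm k; rewrite /run_odd_mult lt_ki.
rewrite /run_odd_mult; case: ltngtP => [lt_ki | // | /val_inj -> //].
by have /implyP := runm k; apply; rewrite ltnW.
Qed.

Lemma sum_omega n :
  \sum_(m : {ffun 'I_n -> 'I_n.+1} | is_partition m) omega m =
  #|[pred m : {ffun 'I_n -> 'I_n.+1} | is_partition m]|%:R +
  \sum_(i < n) (4 * (-1) ^+ i.+1) *
     #|[pred m : {ffun 'I_n -> 'I_n.+1} |
        is_partition m && (in_initial_run m i && odd (m i))]|%:R.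
Proof.
rewrite /omega big_split /= -sum1_card natr_sum -mulr_sumr; congr (_ + _).
rewrite (eq_bigr (fun m => \sum_(i < n)
           if in_initial_run m i && odd (m i) then (-1) ^+ i.+1 else 0)); last first.
  by move=> m _; rewrite big_mkcond.
rewrite exchange_big mulr_sumr; apply: eq_bigr => i _.
rewrite -big_mkcondr -sum1_card natr_sum !mulr_sumr.
by apply: eq_bigr => m _; rewrite mulr1.
Qed.

Theorem theorem1p6 (n : nat) (hn : (0 < n)%N) :
  MeMo n = \sum_(m : {ffun 'I_n -> 'I_n.+1} | is_partition m) omega m.
Proof.
rewrite /MeMo -(coef_eqmodX (omega_gf_eqmodX n) (ltnSn n)) sum_omega.
rewrite /omega_gf coefD coef_sum /partition_gf coef_prod_part_gf.
congr (_ + _).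
  congr (_%:R); apply: eq_card => f; rewrite !inE /is_partition.
  by have -> : [forall k, predT (f k)] by apply/forallP.
apply: eq_bigr => i _; rewrite coefZ /run_odd_gf coef_prod_part_gf.
congr (_ * _%:R); apply: eq_card => f.
by rewrite !inE /is_partition forall_run_odd_mult andbC.
Qed.
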